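(* Let $n\ge 2$, $\sigma\ge 0$, let $z\in\mathbb{C}^n$ satisfy $|z_1|=\cdots=|z_n|=1$, let $W\in\mathbb{C}^{n\times n}$ be $z$-discordant, and let $C=zz^*+\sigma W$. If $x$ is a global optimizer of \[\max_{x\in\mathbb{C}^n} x^*Cx \quad\text{subject to } |x_1|=\cdots=|x_n|=1\] with global phase such that $z^*x=|z^*x|$, then \[\|x-z\|_\infty\le 6\left(\sqrt{\log n}+29\sigma\right)\sigma n^{-1/2}.\]
   Context: For $z\in\mathbb{C}^n$ with unit-modulus entries, a matrix $W\in\mathbb{C}^{n\times n}$ is called $z$-discordant if it is Hermitian and satisfies both $\|W\|_{\mathrm{op}}\le 3\sqrt{n}$ (operator norm = largest singular value) and $\|Wz\|_\infty\le 3\sqrt{n\log n}$, with $\log$ the natural logarithm. *)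

From HB Require Import structures.
From mathcomp Require Import all_boot all_order all_algebra.
From mathcomp Require Import complex.
From mathcomp Require Import classical_sets reals exp.
Set Implicit Arguments. Unset Strict Implicit. Unset Printing Implicit Defensive.
Import Order.TTheory GRing.Theory Num.Theory.
Local Open Scope ring_scope.

Section Defs.
Variable R : realType.
Local Notation C := R[i].

Definition cmod (x : C) : R := Normc.normc x.

Definition mxadj m n (A : 'M[C]_(m, n)) : 'M[C]_(n, m) := (map_mx Num.conj A)^T.

Definition hermitian n (A : 'M[C]_n) : Prop := mxadj A = A.

Definition vnorm2 n (v : 'cV[C]_n) : R := Num.sqrt (\sum_i cmod (v i 0) ^+ 2).
Definition vnorminf n (v : 'cV[C]_n) : R := \big[Num.max/0]_i cmod (v i 0).

Definition opnorm n (A : 'M[C]_n) : R :=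
  sup [set vnorm2 (A *m v) | v in [set v : 'cV[C]_n | vnorm2 v = 1]]%classic.

Definition unimodular n (x : 'cV[C]_n) : Prop := forall i, cmod (x i 0) = 1.

Definition discordant n (z : 'cV[C]_n) (W : 'M[C]_n) : Prop :=
  [/\ hermitian W,
      opnorm W <= 3 * Num.sqrt n%:R
    & vnorminf (W *m z) <= 3 * Num.sqrt (n%:R * ln n%:R)].

Definition qform n (A : 'M[C]_n) (x : 'cV[C]_n) : C := (mxadj x *m A *m x) 0 0.

Definition global_opt n (A : 'M[C]_n) (x : 'cV[C]_n) : Prop :=
  unimodular x /\
  forall y : 'cV[C]_n, unimodular y -> Re (qform A y) <= Re (qform A x).

End Defs.

From Pilot Require Import Defs.
From HB Require Import structures.
From mathcomp Require Import all_boot all_order all_algebra.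
From mathcomp Require Import complex.
From mathcomp Require Import classical_sets reals exp.
From mathcomp Require Import ring lra.
Import Order.TTheory GRing.Theory Num.Theory.
Set Implicit Arguments. Unset Strict Implicit. Unset Printing Implicit Defensive.
Local Open Scope ring_scope.

(* Write m = z^* x, which is real and nonnegative by the choice of phase.
   Comparing the objective at x and at z gives
     n^2 - m^2 <= sigma Re ((x - z)^* W (x + z)) <= sigma |W| |x - z| |x + z|,
   and since |x - z|^2 = 2 (n - m), |x + z|^2 = 2 (n + m) and |W| <= 3 sqrt n,
   this yields n - m <= 36 sigma^2.  Comparing x with the vector obtained by
   replacing its i-th entry by z_i gives
     |x_i - z_i| (m + 1 - sigma |W|) <= 2 sigma |(W x)_i|
                                     <= 2 sigma (|(W z)_i| + |W| |x - z|),
   and the two discordance bounds turn this into the claim after elementary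
   real arithmetic. *)

Section RealArithmetic.
Variable R : realFieldType.

Lemma le_of_sqr_le (a b : R) : 0 <= b -> a ^+ 2 <= b ^+ 2 -> a <= b.
Proof.
move=> b0 h; rewrite leNgt; apply/negP => ba.
have : b ^+ 2 < a ^+ 2 by nra.
lra.
Qed.

Lemma CauchySchwarz_sum n (f g : 'I_n -> R) :
  (\sum_j f j * g j) ^+ 2 <= (\sum_j f j ^+ 2) * (\sum_j g j ^+ 2).
Proof.
set A := \sum_j f j ^+ 2; set B := \sum_j g j ^+ 2; set P := \sum_j f j * g j.
have quad t : 0 <= t ^+ 2 * A - 2 * t * P + B.
  have -> : t ^+ 2 * A - 2 * t * P + B = \sum_j (t * f j - g j) ^+ 2.
    rewrite /A /B /P mulr_sumr mulr_sumr -sumrN -!big_split /=.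
    by apply: eq_bigr => j _; ring.
  by apply: sumr_ge0 => j _; apply: sqr_ge0.
have A0 : 0 <= A by apply: sumr_ge0 => j _; apply: sqr_ge0.
have [A_eq0|A_neq0] := eqVneq A 0.
  have f0 j : f j = 0.
    apply/eqP; rewrite -sqrf_eq0; apply/eqP; move/eqP: A_eq0.
    rewrite /A psumr_eq0; last by move=> i _; apply: sqr_ge0.
    by move=> /allP /(_ j (mem_index_enum j)) /implyP /(_ isT) /eqP.
  have -> : P = 0 by rewrite /P big1 // => j _; rewrite f0 mul0r.
  by rewrite expr0n /= mulr_ge0 //; apply: sumr_ge0 => j _; apply: sqr_ge0.
have Ap : 0 < A by rewrite lt_def A_neq0 A0.
have := quad (P / A).
have -> : (P / A) ^+ 2 * A - 2 * (P / A) * P + B = B - P ^+ 2 / A.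
  by field; rewrite gt_eqF.
by rewrite subr_ge0 ler_pdivrMr // mulrC.
Qed.

(* Here N = n, m = z^* x, K = |W|, D = |x - z|, S = |x + z| and s = sigma;
   squaring the last hypothesis gives P^2 <= 4 s^2 K^2 P for P = N^2 - m^2. *)
Lemma optimality_gap_bound (N m s K D S : R) :
  2 <= N -> 0 <= m -> 0 <= s -> 0 <= K -> K ^+ 2 <= 9 * N ->
  0 <= D -> 0 <= S -> D ^+ 2 = 2 * N - 2 * m -> S ^+ 2 = 2 * N + 2 * m ->
  N ^+ 2 - m ^+ 2 <= s * (D * (K * S)) -> N - m <= 36 * s ^+ 2.
Proof.
move=> hN hm hs hK hK2 hD hS hD2 hS2 h.
have mN : m <= N by nra.
set P := N ^+ 2 - m ^+ 2.
have P0 : 0 <= P by rewrite /P; nra.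
have hP2 : P ^+ 2 <= s ^+ 2 * K ^+ 2 * (4 * P).
  have -> : s ^+ 2 * K ^+ 2 * (4 * P) = (s * (D * (K * S))) ^+ 2.
    by rewrite !exprMn hD2 hS2 /P; ring.
  have h0 : 0 <= s * (D * (K * S)) by rewrite !mulr_ge0.
  by rewrite !expr2 ler_pM.
have hP : P <= 4 * s ^+ 2 * K ^+ 2.
  have [->|Pn0] := eqVneq P 0; first by rewrite !mulr_ge0 // ?sqr_ge0.
  have Pp : 0 < P by rewrite lt_def Pn0 P0.
  by nra.
have : (N - m) * N <= 36 * s ^+ 2 * N.
  have : (N - m) * N <= P by rewrite /P; nra.
  have : 4 * s ^+ 2 * K ^+ 2 <= 36 * s ^+ 2 * N.
    have hs2 : 0 <= s ^+ 2 by apply: sqr_ge0.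
    nra.
  lra.
rewrite ler_pM2r //; lra.
Qed.

(* The case 6 (l + 29 s) s / r < 2 of the final estimate (otherwise it is
   implied by |x_i - z_i| <= 2); here r = sqrt n, l = sqrt (ln n), E = n - m
   and D = |x - z| <= 6 sqrt 2 s <= 17/2 s. *)
Lemma coordinate_bound_small_regime (r s l E D : R) :
  2 <= r ^+ 2 -> 0 <= r -> 0 <= l -> l <= r -> 0 <= s ->
  3 * s * l + 87 * s ^+ 2 <= r ->
  0 <= E -> E <= 36 * s ^+ 2 -> 0 <= D -> D <= 17/2 * s ->
  r ^+ 2 * (l + D) <= (l + 29 * s) * (r ^+ 2 + 1 - E - 3 * s * r).
Proof.
move=> hr2 hr hl hlr hs hc hE hE2 hD hD2.
have hs2 : 87 * s ^+ 2 <= r by nra.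
have hr1 : 1 <= r by nra.
have hP : 0 <= 35/2 * r ^+ 2 + 29 - 12 * r by nra.
have hP2 : (123 * r * s) ^+ 2 <= (35/2 * r ^+ 2 + 29 - 12 * r) ^+ 2 by nra.
have hP3 : 123 * r * s <= 35/2 * r ^+ 2 + 29 - 12 * r by apply: le_of_sqr_le.
have h1 : r ^+ 2 * D <= 17/2 * s * r ^+ 2 by nra.
have hsr : 0 <= s * r by exact: mulr_ge0.
have h2 : 3 * s * r * l <= 3 * s * r ^+ 2 by nra.
have hs2' : 0 <= s ^+ 2 by nra.
have h3 : l * E <= 36 * s ^+ 2 * r by nra.
have h4 : 29 * s * E <= 1044 * s ^+ 3 by nra.
have h5 : 1044 * s ^+ 2 <= 12 * r by nra.
have h6 : 1044 * s ^+ 3 <= 12 * r * s by nra.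
have h7 : s * (123 * r * s) <= s * (35/2 * r ^+ 2 + 29 - 12 * r) by rewrite ler_wpM2l.
nra.
Qed.

Lemma coordinate_bound_arith (r s l E D d : R) :
  2 <= r ^+ 2 -> 0 <= r -> 0 <= l -> l <= r -> 0 <= s ->
  0 <= E -> E <= 36 * s ^+ 2 -> 0 <= D -> D ^+ 2 = 2 * E -> 0 <= d -> d <= 2 ->
  d * (r ^+ 2 + 1 - E - 3 * s * r) <= 6 * s * r * (l + D) ->
  d <= 6 * (l + 29 * s) * s / r.
Proof.
move=> hr2 hr hl hlr hs hE hE2 hD hDE hd hd2 h.
have rp : 0 < r by nra.
rewrite ler_pdivlMr //.
have [big|small] := lerP (2 * r) (6 * (l + 29 * s) * s); first by nra.
have hc : 3 * s * l + 87 * s ^+ 2 <= r by nra.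
have hD2 : D <= 17/2 * s by apply: le_of_sqr_le; nra.
have hk := coordinate_bound_small_regime hr2 hr hl hlr hs hc hE hE2 hD hD2.
set den := r ^+ 2 + 1 - E - 3 * s * r in h hk.
have hs2 : 87 * s ^+ 2 <= r by nra.
have hden : 0 < den.
  have h1 : 3 * s * r <= r ^+ 2 / 2.
    have : 6 * s <= r by apply: le_of_sqr_le => //; nra.
    nra.
  rewrite /den; nra.
have : d * den * r <= 6 * (l + 29 * s) * s * den.
  have : d * den * r <= 6 * s * r ^+ 2 * (l + D) by have := ler_wpM2r hr h; nra.
  have : 6 * s * (r ^+ 2 * (l + D)) <= 6 * s * ((l + 29 * s) * den).
    by rewrite ler_wpM2l // mulr_ge0.
  nra.
have -> : d * den * r = (d * r) * den by ring.
by rewrite ler_pM2r.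
Qed.

End RealArithmetic.

Section ComplexScalars.
Variable R : realType.
Local Notation C := R[i].
Implicit Types c d : C.
Local Notation Re := (@complex.Re R).
Local Notation Im := (@complex.Im R).

Lemma cReD c d : Re (c + d) = Re c + Re d.
Proof. by case: c => ? ?; case: d. Qed.
Lemma cImD c d : Im (c + d) = Im c + Im d.
Proof. by case: c => ? ?; case: d. Qed.
Lemma cReN c : Re (- c) = - Re c.
Proof. by case: c. Qed.
Lemma cImN c : Im (- c) = - Im c.
Proof. by case: c. Qed.
Lemma cReB c d : Re (c - d) = Re c - Re d.
Proof. by rewrite cReD cReN. Qed.
Lemma cImB c d : Im (c - d) = Im c - Im d.
Proof. by rewrite cImD cImN. Qed.
Lemma cReM c d : Re (c * d) = Re c * Re d - Im c * Im d.
Proof. by case: c => ? ?; case: d. Qed.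
Lemma cImM c d : Im (c * d) = Re c * Im d + Im c * Re d.
Proof. by case: c => a b; case: d => e f /=; ring. Qed.
Lemma cReJ c : Re (Num.conj c) = Re c.
Proof. by case: c. Qed.
Lemma cImJ c : Im (Num.conj c) = - Im c.
Proof. by case: c. Qed.

Lemma cRe_sum (I : finType) (f : I -> C) : Re (\sum_i f i) = \sum_i Re (f i).
Proof. exact: (big_morph _ cReD (erefl : Re 0 = 0)). Qed.

Lemma cRe_conjM c : Re (Num.conj c * c) = Re c ^+ 2 + Im c ^+ 2.
Proof. by rewrite cReM cReJ cImJ; ring. Qed.
Lemma cIm_conjM c : Im (Num.conj c * c) = 0.
Proof. by rewrite cImM cReJ cImJ; ring. Qed.

Lemma NumRe_complex c : Num.Theory.Re c = ((Re c)%:C)%C.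
Proof. by rewrite ReE ReJ_add. Qed.

Lemma cnormE c : `|c| = ((cmod c)%:C)%C.
Proof. by case: c. Qed.
Lemma cmod_ge0 c : 0 <= cmod c.
Proof. by case: c => a b; rewrite /cmod /= sqrtr_ge0. Qed.
Lemma sqr_cmod c : cmod c ^+ 2 = Re c ^+ 2 + Im c ^+ 2.
Proof. by case: c => a b; rewrite /cmod /= sqr_sqrtr // addr_ge0 // sqr_ge0. Qed.
Lemma conjM_cmod c : Num.conj c * c = ((cmod c ^+ 2)%:C)%C.
Proof. by apply/eqP; rewrite eq_complex cRe_conjM cIm_conjM sqr_cmod !eqxx. Qed.
Lemma cmod_unit c : cmod c = 1 -> Re c ^+ 2 + Im c ^+ 2 = 1.
Proof. by move=> h; rewrite -sqr_cmod h expr1n. Qed.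
Lemma cmodR (a : R) : cmod ((a%:C)%C : C) = `|a|.
Proof. by rewrite /cmod /= expr0n /= addr0 sqrtr_sqr. Qed.
Lemma cmodJ c : cmod (Num.conj c) = cmod c.
Proof. by case: c => a b; rewrite /cmod /= sqrrN. Qed.
Lemma cmodN c : cmod (- c) = cmod c.
Proof. by apply: complexI; rewrite -!cnormE normrN. Qed.
Lemma cmodM c d : cmod (c * d) = cmod c * cmod d.
Proof. by apply: complexI; rewrite rmorphM /= -!cnormE normrM. Qed.
Lemma cmodD c d : cmod (c + d) <= cmod c + cmod d.
Proof. by rewrite -lecR rmorphD /= -!cnormE ler_normD. Qed.
Lemma cmod_sum (I : finType) (f : I -> C) : cmod (\sum_i f i) <= \sum_i cmod (f i).
Proof.
rewrite -lecR -cnormE rmorph_sum /=; apply: le_trans (ler_norm_sum _ _ _) _.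
by apply: ler_sum => i _; rewrite cnormE.
Qed.

Lemma cRe_le_cmod c : Re c <= cmod c.
Proof.
case: c => a b; rewrite /cmod /= (le_trans (ler_norm a)) // -sqrtr_sqr.
by rewrite ler_sqrt ?addr_ge0 ?sqr_ge0 // lerDl sqr_ge0.
Qed.

Lemma norm_cRe_le_cmod c : `|Re c| <= cmod c.
Proof.
rewrite ler_norml cRe_le_cmod andbT.
by rewrite lerNl -cReN -cmodN cRe_le_cmod.
Qed.

Lemma norm_cRe_conjM_le c d : `|Re (Num.conj c * d)| <= cmod c * cmod d.
Proof. by rewrite (le_trans (norm_cRe_le_cmod _)) // cmodM cmodJ. Qed.

End ComplexScalars.

Section Vectors.
Variables (R : realType) (n : nat).
Local Notation C := R[i].
Local Notation Re := (@complex.Re R).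
Implicit Types u v w : 'cV[C]_n.

Definition dot u v : C := \sum_j Num.conj (u j 0) * v j 0.
Definition sqnorm v : R := \sum_j cmod (v j 0) ^+ 2.

Lemma dotE u v : (mxadj u *m v) 0 0 = dot u v.
Proof. by rewrite mxE; apply: eq_bigr => j _; rewrite !mxE. Qed.

Lemma dotC u v : dot u v = Num.conj (dot v u).
Proof.
rewrite /dot rmorph_sum; apply: eq_bigr => j _.
by rewrite rmorphM /= conjCK mulrC.
Qed.

Lemma dotDr u v w : dot u (v + w) = dot u v + dot u w.
Proof. by rewrite /dot -big_split; apply: eq_bigr => j _; rewrite mxE mulrDr. Qed.
Lemma dotDl u v w : dot (u + v) w = dot u w + dot v w.
Proof. by rewrite /dot -big_split; apply: eq_bigr => j _; rewrite mxE rmorphD mulrDl. Qed.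
Lemma dotNl u v : dot (- u) v = - dot u v.
Proof. by rewrite /dot -sumrN; apply: eq_bigr => j _; rewrite mxE rmorphN mulNr. Qed.
Lemma dotBl u v w : dot (u - v) w = dot u w - dot v w.
Proof. by rewrite dotDl dotNl. Qed.
Lemma dotZr (a : C) u v : dot u (a *: v) = a * dot u v.
Proof. by rewrite /dot mulr_sumr; apply: eq_bigr => j _; rewrite mxE mulrCA. Qed.
Lemma dotZl (a : C) u v : dot (a *: u) v = Num.conj a * dot u v.
Proof. by rewrite /dot mulr_sumr; apply: eq_bigr => j _; rewrite mxE rmorphM mulrA. Qed.

Lemma sqnorm_ge0 v : 0 <= sqnorm v.
Proof. by apply: sumr_ge0 => j _; apply: sqr_ge0. Qed.

Lemma sqr_vnorm2 v : vnorm2 v ^+ 2 = sqnorm v.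
Proof. by rewrite sqr_sqrtr // sqnorm_ge0. Qed.

Lemma vnorm2_ge0 v : 0 <= vnorm2 v.
Proof. exact: sqrtr_ge0. Qed.

Lemma sqnorm_eq0 v : sqnorm v = 0 -> v = 0.
Proof.
move/eqP; rewrite psumr_eq0; last by move=> j _; apply: sqr_ge0.
move=> /allP h; apply/matrixP => j k; rewrite ord1 mxE.
apply: Normc.eq0_normc; apply/eqP; rewrite -sqrf_eq0.
exact: implyP (h j (mem_index_enum j)) isT.
Qed.

Lemma vnorm2Z (a : R) v : 0 <= a -> vnorm2 ((a%:C)%C *: v) = a * vnorm2 v.
Proof.
move=> a0; rewrite /vnorm2 -{2}(ger0_norm a0) -sqrtr_sqr -sqrtrM ?sqr_ge0 //.
congr Num.sqrt; rewrite mulr_sumr; apply: eq_bigr => j _.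
by rewrite mxE cmodM cmodR exprMn real_normK // num_real.
Qed.

Lemma norm_cRe_dot_le u v : `|Re (dot u v)| <= vnorm2 u * vnorm2 v.
Proof.
rewrite cRe_sum; apply: le_trans (ler_norm_sum _ _ _) _.
apply: (@le_trans _ _ (\sum_j cmod (u j 0) * cmod (v j 0))).
  by apply: ler_sum => j _; apply: norm_cRe_conjM_le.
apply: le_of_sqr_le; first by rewrite mulr_ge0 // vnorm2_ge0.
by rewrite exprMn !sqr_vnorm2; apply: CauchySchwarz_sum.
Qed.

Lemma cmod_entry_le_vnorm2 v (i : 'I_n) : cmod (v i 0) <= vnorm2 v.
Proof.
apply: le_of_sqr_le; first exact: vnorm2_ge0.
rewrite sqr_vnorm2 /sqnorm (bigD1 i) //= lerDl.
by apply: sumr_ge0 => j _; apply: sqr_ge0.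
Qed.

Lemma delta_entry (i j : 'I_n) : (delta_mx i 0 : 'cV[C]_n) j 0 = (i == j)%:R.
Proof. by rewrite mxE eqxx andbT eq_sym. Qed.

Lemma dot_deltal (i : 'I_n) v : dot (delta_mx i 0) v = v i 0.
Proof.
rewrite /dot (bigD1 i) //= big1 ?addr0.
  by rewrite delta_entry eqxx rmorph1 mul1r.
by move=> j /negbTE ji; rewrite delta_entry eq_sym ji rmorph0 mul0r.
Qed.

Lemma mul_delta_entry (A : 'M[C]_n) (i j : 'I_n) :
  (A *m (delta_mx i 0 : 'cV[C]_n)) j 0 = A j i.
Proof. by rewrite -colE mxE. Qed.

Lemma vnorm2_delta (i : 'I_n) : vnorm2 (delta_mx i 0 : 'cV[C]_n) = 1.
Proof.
rewrite /vnorm2 (bigD1 i) //= big1 ?addr0.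
  by rewrite delta_entry eqxx cmodR normr1 expr1n sqrtr1.
by move=> j /negbTE ji; rewrite delta_entry eq_sym ji cmodR normr0 expr0n.
Qed.

Lemma dot_unimodular_self v : unimodular v -> dot v v = ((n%:R)%:C)%C.
Proof.
move=> hv; have -> : (n%:R : R) = \sum_(j < n) 1 by rewrite sumr_const card_ord.
rewrite rmorph_sum; apply: eq_bigr => j _.
by rewrite conjM_cmod hv expr1n.
Qed.

Lemma sqnorm_sub_unimodular u v : unimodular u -> unimodular v ->
  sqnorm (u - v) = 2 * n%:R - 2 * Re (dot v u).
Proof.
move=> hu hv; have -> : n%:R = \sum_(j < n) (1 : R) by rewrite sumr_const card_ord.
rewrite cRe_sum /sqnorm.
rewrite !mulr_sumr -sumrB; apply: eq_bigr => j _.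
rewrite !mxE sqr_cmod cReB cImB cReM cReJ cImJ.
have := cmod_unit (hu j); have := cmod_unit (hv j); nra.
Qed.

Lemma sqnorm_add_unimodular u v : unimodular u -> unimodular v ->
  sqnorm (u + v) = 2 * n%:R + 2 * Re (dot v u).
Proof.
move=> hu hv; have -> : n%:R = \sum_(j < n) (1 : R) by rewrite sumr_const card_ord.
rewrite cRe_sum /sqnorm.
rewrite !mulr_sumr -big_split; apply: eq_bigr => j _ /=.
rewrite !mxE sqr_cmod cReD cImD cReM cReJ cImJ.
have := cmod_unit (hu j); have := cmod_unit (hv j); nra.
Qed.

End Vectors.

Section Hermitian.
Variables (R : realType) (n : nat) (W : 'M[R[i]]_n).
Hypothesis hW : Defs.hermitian W.
Local Notation Re := (@complex.Re R).
Implicit Types u v : 'cV[R[i]]_n.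

Lemma hermitian_conj_entry i j : Num.conj (W j i) = W i j.
Proof. by rewrite -{2}hW !mxE. Qed.

Lemma dot_hermitian u v : dot u (W *m v) = Num.conj (dot v (W *m u)).
Proof.
rewrite /dot rmorph_sum /=.
under eq_bigr => j _ do rewrite mxE mulr_sumr.
under [RHS]eq_bigr => k _ do rewrite mxE rmorphM /= conjCK rmorph_sum mulr_sumr.
rewrite exchange_big /=; apply: eq_bigr => j _; apply: eq_bigr => k _.
by rewrite rmorphM /= hermitian_conj_entry; ring.
Qed.

Lemma cRe_dot_hermitian u v : Re (dot u (W *m v)) = Re (dot v (W *m u)).
Proof. by rewrite dot_hermitian cReJ. Qed.

Lemma cRe_dot_hermitian_sub u v :
  Re (dot u (W *m u)) - Re (dot v (W *m v)) = Re (dot (u - v) (W *m (u + v))).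
Proof. by rewrite mulmxDr dotBl !dotDr !cReB !cReD (cRe_dot_hermitian u v); ring. Qed.

Lemma cRe_dot_hermitian_update u (c : R[i]) (i : 'I_n) :
  let v := u + c *: delta_mx i 0 in
  Re (dot v (W *m v)) =
  Re (dot u (W *m u)) + 2 * Re (Num.conj c * (W *m u) i 0) + cmod c ^+ 2 * Re (W i i).
Proof.
rewrite /= mulmxDr -scalemxAr dotDl !dotDr !dotZl !dotZr.
rewrite (dot_hermitian u (delta_mx i 0)) !dot_deltal mul_delta_entry sqr_cmod.
by rewrite !cReD !cReM !cImM !cReJ !cImJ; ring.
Qed.

End Hermitian.

Section OperatorNorm.
Variables (R : realType) (n : nat) (W : 'M[R[i]]_n).
Implicit Types v : 'cV[R[i]]_n.

Let image_unit_sphere :=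
  [set vnorm2 (W *m v) | v in [set v : 'cV[R[i]]_n | vnorm2 v = 1]]%classic.

(* The index i0 only witnesses n > 0: for n = 0 the unit sphere is empty and
   opnorm is a junk value of sup. *)
Lemma opnorm_has_sup (i0 : 'I_n) : has_sup image_unit_sphere.
Proof.
split.
  exists (vnorm2 (W *m delta_mx i0 0)); exists (delta_mx i0 0) => //=.
  exact: vnorm2_delta.
exists (Num.sqrt (\sum_i (\sum_k cmod (W i k)) ^+ 2)).
move=> _ [v /= v1 <-]; rewrite ler_sqrt; last by apply: sumr_ge0 => i _; apply: sqr_ge0.
apply: ler_sum => i _.
have row_bound : cmod ((W *m v) i 0) <= \sum_k cmod (W i k).
  rewrite mxE; apply: le_trans (cmod_sum _) _; apply: ler_sum => k _.
  by rewrite cmodM ler_piMr ?cmod_ge0 // -v1 cmod_entry_le_vnorm2.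
by rewrite !expr2 ler_pM ?cmod_ge0.
Qed.

Lemma vnorm2_mul_le_opnorm (i0 : 'I_n) v : vnorm2 v = 1 -> vnorm2 (W *m v) <= opnorm W.
Proof. by move=> v1; apply: sup_upper_bound (opnorm_has_sup i0) _ _; exists v. Qed.

Lemma opnorm_ge0 (i0 : 'I_n) : 0 <= opnorm W.
Proof.
apply: le_trans (vnorm2_mul_le_opnorm i0 (vnorm2_delta R i0)).
exact: vnorm2_ge0.
Qed.

Lemma vnorm2_mulmx_le (i0 : 'I_n) v : vnorm2 (W *m v) <= opnorm W * vnorm2 v.
Proof.
have [v0|vn0] := eqVneq (sqnorm v) 0.
  by rewrite (sqnorm_eq0 v0) mulmx0 /vnorm2 big1 ?sqrtr0 ?mulr0 // => j _;
     rewrite mxE cmodR normr0 expr0n.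
have s0 : 0 < vnorm2 v by rewrite sqrtr_gt0 lt_def vn0 sqnorm_ge0.
have hu : vnorm2 (((vnorm2 v)^-1)%:C%C *: v) = 1.
  by rewrite vnorm2Z ?invr_ge0 ?ltW // mulVf // gt_eqF.
have := vnorm2_mul_le_opnorm i0 hu.
rewrite -scalemxAr vnorm2Z; last by rewrite invr_ge0 ltW.
by rewrite ler_pdivrMl // mulrC.
Qed.

Lemma cmod_entry_le_opnorm (i j : 'I_n) : cmod (W i j) <= opnorm W.
Proof.
rewrite -(mul_delta_entry W j i); apply: le_trans (cmod_entry_le_vnorm2 _ i) _.
exact: vnorm2_mul_le_opnorm (vnorm2_delta R j).
Qed.

End OperatorNorm.

Section Optimality.
Variables (R : realType) (n : nat) (sigma : R) (z x : 'cV[R[i]]_n) (W : 'M[R[i]]_n).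
Local Notation Re := (@complex.Re R).
Local Notation Im := (@complex.Im R).
Local Notation A := (z *m mxadj z + (sigma%:C)%C *: W).

Lemma cRe_qform_planted v :
  Re (qform A v) = Re (dot z v) ^+ 2 + Im (dot z v) ^+ 2 + sigma * Re (dot v (W *m v)).
Proof.
have rank_one : (mxadj v *m (z *m (mxadj z *m v))) 0 0 = dot v z * dot z v.
  by rewrite mulmxA [LHS]mxE big_ord1 !dotE.
rewrite /qform -mulmxA mulmxDl -scalemxAl -mulmxA mulmxDr -scalemxAr.
rewrite [X in Re X]mxE [X in _ + X]mxE rank_one dotE cReD {1}dotC cRe_conjM.
by rewrite cReM /= mul0r subr0.
Qed.

Lemma le_cRe_qform_optimal v : global_opt A x -> unimodular v ->
  Re (qform A v) <= Re (qform A x).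
Proof. by case=> _ /(_ v) opt /opt; rewrite !NumRe_complex lecR. Qed.

Hypothesis hs : 0 <= sigma.
Hypothesis hz : unimodular z.
Hypothesis hH : Defs.hermitian W.
Hypothesis hxo : global_opt A x.
Hypothesis hph : (mxadj z *m x) 0 0 = `|(mxadj z *m x) 0 0|.

Let hx : unimodular x. Proof. by case: hxo. Qed.

Lemma aligned_dot : dot z x = ((Re (dot z x))%:C)%C.
Proof. by move: hph; rewrite dotE cnormE => ->. Qed.

Lemma cIm_aligned_dot : Im (dot z x) = 0.
Proof. by rewrite aligned_dot. Qed.

Lemma cRe_aligned_dot_ge0 : 0 <= Re (dot z x).
Proof. by move: hph; rewrite dotE cnormE => ->; apply: cmod_ge0. Qed.

Lemma optimal_ge_planted :
  n%:R ^+ 2 + sigma * Re (dot z (W *m z)) <=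
  Re (dot z x) ^+ 2 + sigma * Re (dot x (W *m x)).
Proof.
have := le_cRe_qform_optimal hxo hz.
by rewrite !cRe_qform_planted (dot_unimodular_self hz) cIm_aligned_dot /= expr0n /= !addr0.
Qed.

Section EntrySwap.
Variable i : 'I_n.
Let c := z i 0 - x i 0.
Let y := x + c *: delta_mx i 0.

Lemma unimodular_entry_swap : unimodular y.
Proof.
move=> j; rewrite /y !mxE eqxx andbT.
have [<-|_] := eqVneq i j; first by rewrite mulr1 /c addrC subrK; apply: hz.
by rewrite mulr0 addr0; apply: hx.
Qed.

(* Since |x_i| = |z_i| = 1, Re (conj z_i c) = |c|^2 / 2 and |conj z_i c| = |c|. *)
Lemma sqr_dot_entry_swap :
  Re (dot z y) ^+ 2 + Im (dot z y) ^+ 2 =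
  Re (dot z x) ^+ 2 + (Re (dot z x) + 1) * cmod c ^+ 2.
Proof.
rewrite /y dotDr dotZr (dotC z (delta_mx i 0)) dot_deltal cReD cImD cReM cImM cReJ cImJ.
rewrite cIm_aligned_dot sqr_cmod /c cReB cImB.
have h1 := cmod_unit (hx i); have h2 := cmod_unit (hz i).
set a := Re (x i 0) in h1 *; set b := Im (x i 0) in h1 *.
set p := Re (z i 0) in h2 *; set q := Im (z i 0) in h2 *.
set M := Re (dot z x).
have hv : ((p - a) * - q + (q - b) * p) ^+ 2 = (a * q - b * p) ^+ 2 by ring.
have hs2 : (a * p + b * q) ^+ 2 + (a * q - b * p) ^+ 2 = 1.
  have -> : (a * p + b * q) ^+ 2 + (a * q - b * p) ^+ 2 =
            (a ^+ 2 + b ^+ 2) * (p ^+ 2 + q ^+ 2) by ring.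
  by rewrite h1 h2 mulr1.
have hg : (p - a) * p - (q - b) * - q = 1 - (a * p + b * q) by nra.
have hd : (p - a) ^+ 2 + (q - b) ^+ 2 = 2 - 2 * (a * p + b * q) by nra.
rewrite add0r hv hg hd; set s := a * p + b * q in hs2 *.
nra.
Qed.

Lemma optimal_le_entry_swap :
  cmod c ^+ 2 * (Re (dot z x) + 1 + sigma * Re (W i i))
    + 2 * sigma * Re (Num.conj c * (W *m x) i 0) <= 0.
Proof.
have := le_cRe_qform_optimal hxo unimodular_entry_swap.
rewrite !cRe_qform_planted sqr_dot_entry_swap cIm_aligned_dot.
rewrite /y (cRe_dot_hermitian_update hH) expr0n /= addr0.
lra.
Qed.

End EntrySwap.

Lemma optimality_gap (i0 : 'I_n) : (2 <= n)%N -> opnorm W <= 3 * Num.sqrt n%:R ->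
  n%:R - Re (dot z x) <= 36 * sigma ^+ 2.
Proof.
move=> hn hK.
have K0 := opnorm_ge0 W i0.
apply: (@optimality_gap_bound _ n%:R (Re (dot z x)) sigma (opnorm W)
          (vnorm2 (x - z)) (vnorm2 (x + z))).
- by rewrite (ler_nat R 2 n).
- exact: cRe_aligned_dot_ge0.
- exact: hs.
- exact: K0.
- have : opnorm W ^+ 2 <= (3 * Num.sqrt n%:R) ^+ 2 by rewrite !expr2 ler_pM.
  by rewrite exprMn sqr_sqrtr //; nra.
- exact: vnorm2_ge0.
- exact: vnorm2_ge0.
- by rewrite sqr_vnorm2 sqnorm_sub_unimodular.
- by rewrite sqr_vnorm2 sqnorm_add_unimodular.
have cross : Re (dot x (W *m x)) - Re (dot z (W *m z)) <=
              vnorm2 (x - z) * (opnorm W * vnorm2 (x + z)).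
  rewrite cRe_dot_hermitian_sub //; apply: le_trans (ler_norm _) _.
  apply: le_trans (norm_cRe_dot_le _ _) _.
  by rewrite ler_wpM2l ?vnorm2_ge0 // vnorm2_mulmx_le.
have := ler_wpM2l hs cross; have := optimal_ge_planted; lra.
Qed.

Lemma coordinate_bound (i : 'I_n) :
  cmod ((x - z) i 0) * (Re (dot z x) + 1 - sigma * opnorm W) <=
    2 * sigma * (vnorminf (W *m z) + opnorm W * vnorm2 (x - z)).
Proof.
have swap := optimal_le_entry_swap i.
set c := z i 0 - x i 0 in swap.
have -> : cmod ((x - z) i 0) = cmod c by rewrite !mxE -cmodN opprB.
set d := cmod c in swap *; set w := (W *m x) i 0 in swap.
set m := Re (dot z x) in swap *; set K := opnorm W.
have d0 : 0 <= d := cmod_ge0 c.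
have w0 : 0 <= cmod w := cmod_ge0 w.
have m0 : 0 <= m := cRe_aligned_dot_ge0.
have w_le : cmod w <= vnorminf (W *m z) + K * vnorm2 (x - z).
  have Wx : W *m x = W *m z + W *m (x - z) by rewrite -mulmxDr addrC subrK.
  rewrite /w Wx mxE; apply: le_trans (cmodD _ _) _; apply: lerD.
    exact: (le_bigmax _ (fun j => cmod ((W *m z) j 0)) i).
  exact: le_trans (cmod_entry_le_vnorm2 _ i) (vnorm2_mulmx_le W i _).
have cross : - (d * cmod w) <= Re (Num.conj c * w).
  by rewrite lerNl; apply: le_trans (norm_cRe_conjM_le c w); rewrite -normrN ler_norm.
have diag : - K <= Re (W i i).
  rewrite lerNl; apply: le_trans (ler_norm _) _; rewrite normrN.
  exact: le_trans (norm_cRe_le_cmod _) (cmod_entry_le_opnorm W i i).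
have sqr_bound : d ^+ 2 * (m + 1 - sigma * K) <= 2 * sigma * d * cmod w.
  have : d ^+ 2 * (m + 1 - sigma * K) <= d ^+ 2 * (m + 1 + sigma * Re (W i i)).
    by rewrite ler_wpM2l ?sqr_ge0 //; have := ler_wpM2l hs diag; lra.
  have := ler_wpM2l hs cross; lra.
have lin_bound : d * (m + 1 - sigma * K) <= 2 * sigma * cmod w.
  have [->|dn0] := eqVneq d 0; first by rewrite mul0r !mulr_ge0.
  have dp : 0 < d by rewrite lt_def dn0 d0.
  by rewrite -(ler_pM2l dp); lra.
by apply: le_trans lin_bound _; rewrite ler_wpM2l // mulr_ge0.
Qed.

Lemma coordinate_bound_discordant (i : 'I_n) : discordant z W ->
  cmod ((x - z) i 0) *
    (Num.sqrt n%:R ^+ 2 + 1 - (n%:R - Re (dot z x)) - 3 * sigma * Num.sqrt n%:R)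
  <= 6 * sigma * Num.sqrt n%:R * (Num.sqrt (ln n%:R) + vnorm2 (x - z)).
Proof.
case=> _ hK hWz; have := coordinate_bound i.
set d := cmod _; set r := Num.sqrt n%:R in hK *; set l := Num.sqrt (ln n%:R).
set D := vnorm2 _; set Q := vnorminf _ in hWz *; set K := opnorm W in hK *.
have d0 : 0 <= d := cmod_ge0 _.
have D0 : 0 <= D := vnorm2_ge0 _.
have r0 : 0 <= r := sqrtr_ge0 _.
have hr2 : r ^+ 2 = n%:R by rewrite sqr_sqrtr.
have hQ : Q <= 3 * (r * l) by rewrite -sqrtrM.
have lhs : d * (r ^+ 2 + 1 - (n%:R - Re (dot z x)) - 3 * sigma * r) <=
           d * (Re (dot z x) + 1 - sigma * K).
  by rewrite ler_wpM2l // hr2; have := ler_wpM2l hs hK; lra.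
have rhs : 2 * sigma * (Q + K * D) <= 6 * sigma * r * (l + D).
  have : Q + K * D <= 3 * r * (l + D) by have := ler_wpM2r D0 hK; lra.
  by move=> h; have := ler_wpM2l (mulr_ge0 (ler0n R 2) hs) h; lra.
lra.
Qed.

End Optimality.

Unset Implicit Arguments.

Theorem lemma6 (R : realType) (n : nat) (sigma : R) (z : 'cV[R[i]]_n)
    (W : 'M[R[i]]_n) (x : 'cV[R[i]]_n) :
  (2 <= n)%N -> 0 <= sigma -> unimodular z -> discordant z W ->
  global_opt (z *m mxadj z + (sigma%:C)%C *: W) x ->
  (mxadj z *m x) 0 0 = `|(mxadj z *m x) 0 0| ->
  vnorminf (x - z)
    <= 6 * (Num.sqrt (ln (n%:R : R)) + 29 * sigma) * sigma / Num.sqrt (n%:R : R).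
Proof.
move=> hn hs hz hW hxo hph.
have [hH hK _] := hW; have [hx _] := hxo.
have i0 : 'I_n := Ordinal (leq_trans (isT : (0 < 2)%N) hn).
have hN2 : 2 <= n%:R :> R by rewrite (ler_nat R 2 n).
have gap := optimality_gap hs hz hH hxo hph i0 hn hK.
have dist2 : vnorm2 (x - z) ^+ 2 = 2 * (n%:R - complex.Re (dot z x)).
  by rewrite sqr_vnorm2 sqnorm_sub_unimodular // mulrBr.
have bound_ge0 :
    0 <= 6 * (Num.sqrt (ln (n%:R : R)) + 29 * sigma) * sigma / Num.sqrt (n%:R : R).
  have h29 : 0 <= Num.sqrt (ln (n%:R : R)) + 29 * sigma.
    by rewrite addr_ge0 ?sqrtr_ge0 ?mulr_ge0.
  by rewrite divr_ge0 ?sqrtr_ge0 // !mulr_ge0.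
rewrite /vnorminf; apply: bigmax_le => // i _.
apply: coordinate_bound_arith (coordinate_bound_discordant hs hz hH hxo hph i hW).
- by rewrite sqr_sqrtr.
- exact: sqrtr_ge0.
- exact: sqrtr_ge0.
- by rewrite ler_sqrt ?ltW ?ln_sublinear // (lt_le_trans _ hN2).
- exact: hs.
- by have := sqr_ge0 (vnorm2 (x - z)); rewrite dist2; lra.
- exact: gap.
- exact: vnorm2_ge0.
- exact: dist2.
- exact: cmod_ge0.
- by rewrite !mxE; apply: le_trans (cmodD _ _) _; rewrite cmodN hx hz.
Qed.
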